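(* Let $t_1\le\dots\le t_n$ and $s_1\le\dots\le s_m$ be real numbers, let $f:\mathbb{R}\to\mathbb{R}_{\ge0}$ be a weight function, and let $1\le i\le n$ and $1\le j\le m$. Let $M_{i,j}$ be a maximum-weight matching between $\{t_1,\dots,t_i\}$ and $\{s_1,\dots,s_j\}$ containing no two intersecting edges. If $t_i$ and $s_j$ are not matched to each other in $M_{i,j}$, then at least one of $t_i$, $s_j$ is not matched at all in $M_{i,j}$.
   Context: An edge is a pair $(t_a,s_b)$ with weight $f(s_b-t_a)$. A matching is a set of edges in which each element appears in at most one edge, and its weight is the sum of its edge weights. Two edges $(t_a,s_b)$ and $(t_{a'},s_{b'})$ intersect if $a<a'$ and $b>b'$. *)

From mathcomp Require Import all_boot all_order all_algebra.
From mathcomp Require Import reals.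
Set Implicit Arguments. Unset Strict Implicit. Unset Printing Implicit Defensive.
Import Order.TTheory GRing.Theory Num.Theory.
Local Open Scope ring_scope.

(* Points t_1..t_n are t : 'I_n -> R (0-based), s_1..s_m are s : 'I_m -> R.
   An edge (a, b) : 'I_n * 'I_m stands for (t_a, s_b). *)

Definition is_matching n m (M : {set 'I_n * 'I_m}) : Prop :=
  forall e1 e2, e1 \in M -> e2 \in M ->
    (e1.1 = e2.1 -> e1 = e2) /\ (e1.2 = e2.2 -> e1 = e2).

Definition intersect n m (e1 e2 : 'I_n * 'I_m) : bool :=
  (e1.1 < e2.1)%N && (e2.2 < e1.2)%N.

Definition noncrossing n m (M : {set 'I_n * 'I_m}) : Prop :=
  forall e1 e2, e1 \in M -> e2 \in M -> ~~ intersect e1 e2.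

Definition within n m (i : 'I_n) (j : 'I_m) (M : {set 'I_n * 'I_m}) : Prop :=
  forall e, e \in M -> (e.1 <= i)%N /\ (e.2 <= j)%N.

Definition mweight (R : realType) n m (f : R -> R) (t : 'I_n -> R) (s : 'I_m -> R)
  (M : {set 'I_n * 'I_m}) : R :=
  \sum_(e in M) f (s e.2 - t e.1).

Definition feasible n m i j (M : {set 'I_n * 'I_m}) : Prop :=
  [/\ is_matching M, within i j M & noncrossing M].

Definition max_noncrossing_matching (R : realType) n m (f : R -> R)
  (t : 'I_n -> R) (s : 'I_m -> R) (i : 'I_n) (j : 'I_m) (M : {set 'I_n * 'I_m}) : Prop :=
  feasible i j M /\
  forall M', feasible i j M' -> mweight f t s M' <= mweight f t s M.

From mathcomp Require Import all_boot all_order all_algebra.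
From mathcomp Require Import reals.
Import Order.TTheory GRing.Theory Num.Theory.
Local Open Scope ring_scope.

(* Only non-crossing is needed: edges (a, j) and (i, b) with a < i and b < j
   would intersect, so a matching inside the (i, j) corner touching both
   t_i and s_j must use the edge (t_i, s_j) itself. *)

Lemma noncrossing_corner_edge {n m} {i : 'I_n} {j : 'I_m} {M : {set 'I_n * 'I_m}}
    {a : 'I_n} {b : 'I_m} :
  within i j M -> noncrossing M -> (i, b) \in M -> (a, j) \in M -> (i, j) \in M.
Proof.
move=> hw hnc hib haj; have [ai _] := hw _ haj; have [_ bj] := hw _ hib.
have [<- //|nai] := eqVneq a i; have [<- //|nbj] := eqVneq b j.
have lt_ai : (a < i)%N by rewrite ltn_neqAle ai andbT.
have lt_bj : (b < j)%N by rewrite ltn_neqAle bj andbT.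
by have := hnc _ _ haj hib; rewrite /intersect /= lt_ai lt_bj.
Qed.

Theorem mainTheorem5 (R : realType) (n m : nat) (t : 'I_n -> R) (s : 'I_m -> R)
  (f : R -> R)
  (ht : forall a b : 'I_n, (a <= b)%N -> t a <= t b)
  (hs : forall a b : 'I_m, (a <= b)%N -> s a <= s b)
  (hf : forall x, 0 <= f x)
  (i : 'I_n) (j : 'I_m) (M : {set 'I_n * 'I_m})
  (hM : max_noncrossing_matching f t s i j M) :
  (i, j) \notin M ->
  (forall b : 'I_m, (i, b) \notin M) \/ (forall a : 'I_n, (a, j) \notin M).
Proof.
move=> hij; case: hM => [[_ hw hnc] _].
case: (pickP (fun b => (i, b) \in M)) => [b hib|no_b]; last by left=> b; rewrite no_b.
case: (pickP (fun a => (a, j) \in M)) => [a haj|no_a]; last by right=> a; rewrite no_a.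
by rewrite (noncrossing_corner_edge hw hnc hib haj) in hij.
Qed.
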